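(* Let $X$ be a finite graded poset and let $f\colon X\to\mathbb R$ be a Morse function satisfying the Exclusion condition. Then there exists an order preserving Morse function $f'\colon X\to\mathbb R$ (i.e. $x\le y\Rightarrow f'(x)\le f'(y)$) satisfying the Exclusion condition and having the same associated Morse matching as $f$, i.e. $\mathcal M_{f'}=\mathcal M_f$.
   Context: In a poset, write $a\prec b$ if $a<b$ and there is no $c$ with $a<c<b$. A chain $x_0<\dots<x_n$ has length $n$; a poset is homogeneous of degree $n$ if all its maximal chains have length $n$; $X$ is graded if $U_x=\{y:y\le x\}$ is homogeneous for every $x$. A Morse function on a finite poset $X$ is a map $f\colon X\to\mathbb R$ such that for every $x$, $\#\{y: x\prec y,\ f(x)\ge f(y)\}\le1$ and $\#\{w: w\prec x,\ f(w)\ge f(x)\}\le 1$; $x$ is critical if both sets are empty, regular otherwise. $f$ satisfies the Exclusion condition if for every regular $x$ exactly one of these two sets is nonempty. The associated matching is $\mathcal M_f=\{(w,x): w\prec x,\ f(w)\ge f(x)\}$. *)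

From mathcomp Require Import all_boot.
From Stdlib Require Import Reals.
Set Implicit Arguments. Unset Strict Implicit. Unset Printing Implicit Defensive.

Definition is_poset (T : finType) (le : rel T) : Prop :=
  [/\ reflexive le, antisymmetric le & transitive le].

Section Poset.
Variables (T : finType) (le : rel T).

Definition lt_ (x y : T) : bool := (x != y) && le x y.

Definition covers (a b : T) : bool :=
  lt_ a b && [forall c, ~~ (lt_ a c && lt_ c b)].

Definition is_chain_in (A : pred T) (s : seq T) : Prop :=
  sorted lt_ s /\ all A s.

Definition is_maximal_chain_in (A : pred T) (s : seq T) : Prop :=
  is_chain_in A s /\ s <> [::] /\
  forall t, is_chain_in A t -> {subset s <= t} -> {subset t <= s}.

(* length of chain x_0 < ... < x_n is n *)
Definition homogeneous_of_degree (A : pred T) (n : nat) : Prop :=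
  forall s, is_maximal_chain_in A s -> (size s).-1 = n.

Definition down_set (x : T) : pred T := fun y => le y x.

Definition graded : Prop :=
  forall x, exists n, homogeneous_of_degree (down_set x) n.

Variable f : T -> R.

Definition Rle_b (a b : R) : bool := if Rle_dec a b then true else false.

Definition up_bad (x : T) : pred T := fun y => covers x y && Rle_b (f y) (f x).
Definition down_bad (x : T) : pred T := fun w => covers w x && Rle_b (f x) (f w).

Definition morse : Prop :=
  forall x, #|up_bad x| <= 1 /\ #|down_bad x| <= 1.

Definition critical (x : T) : Prop := #|up_bad x| = 0 /\ #|down_bad x| = 0.

Definition exclusion : Prop :=
  forall x, ~ critical x -> ((0 < #|up_bad x|) <> (0 < #|down_bad x|)).

Definition matching (w x : T) : bool := covers w x && Rle_b (f x) (f w).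

End Poset.

Definition order_preserving (T : finType) (le : rel T) (f : T -> R) : Prop :=
  forall x y, le x y -> (f x <= f y)%R.

From mathcomp Require Import all_boot zify.
From Stdlib Require Import Reals Lra Classical ClassicalEpsilon.
Set Implicit Arguments. Unset Strict Implicit.

(* Let r be the rank function of the graded poset.  Send each element y to the
   lower element lo y of its matched pair (or to y itself), put it at level
   2 r(lo y) + [y is matched], and set f' y = 4 level(y) + atan (f (lo y)).
   Both ends of a matched pair get the same value, so they stay matched.
   Along an unmatched cover a < b the level does not decrease, and f a < f b;
   the levels can only be equal when b is matched from below by some w with
   r w = r a, and then f (lo a) = f a < f b <= f w = f (lo b).  As atan ranges
   over an interval of length pi < 4, f' strictly increases along unmatched
   covers; hence f' is order preserving and has the matching of f. *)

Section Poset.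
Variables (T : finType) (le : rel T).
Hypothesis le_poset : is_poset le.

Let le_refl : reflexive le. Proof. by case: le_poset. Qed.
Let le_anti x y : le x y -> le y x -> x = y.
Proof. by case: le_poset => _ anti _ lexy leyx; apply: anti; rewrite lexy. Qed.
Let le_trans : transitive le. Proof. by case: le_poset. Qed.

Lemma lt_trans : transitive (lt_ le).
Proof.
move=> y x z /andP[nxy lexy] /andP[_ leyz]; rewrite /lt_ (le_trans lexy leyz) andbT.
by apply: contra nxy => /eqP exz; subst z; rewrite (le_anti lexy leyz).
Qed.

Lemma ltxx : irreflexive (lt_ le). Proof. by move=> x; rewrite /lt_ eqxx. Qed.

Lemma sorted_lt_uniq s : sorted (lt_ le) s -> uniq s.
Proof. exact: (sorted_uniq lt_trans ltxx). Qed.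

Lemma size_chain s : sorted (lt_ le) s -> size s <= #|T|.
Proof. by move/sorted_lt_uniq/card_uniqP <-; exact: max_card. Qed.

Lemma chain_total s x y : sorted (lt_ le) s -> x \in s -> y \in s -> x != y ->
  lt_ le x y || lt_ le y x.
Proof.
rewrite (sorted_pairwise lt_trans); elim: s => // z s IH.
rewrite pairwise_cons => /andP[ltz lts]; rewrite !in_cons.
case/orP=> [/eqP->|xs]; case/orP=> [/eqP->|ys].
- by rewrite eqxx.
- by rewrite (allP ltz).
- by rewrite (allP ltz) ?orbT.
- exact: IH.
Qed.

Lemma chain_maximal_or_grows (A : pred T) s : is_chain_in le A s ->
  (forall t, is_chain_in le A t -> {subset s <= t} -> {subset t <= s}) \/
  exists t, [/\ is_chain_in le A t, {subset s <= t} & size s < size t].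
Proof.
move=> [s_sorted _].
have [[t [y [t_chain sst yt ys]]]|no_ext] := classic (exists t y,
  [/\ is_chain_in le A t, {subset s <= t}, y \in t & y \notin s]).
- right; exists t; split=> //; apply: (@uniq_leq_size _ (y :: s)).
    by rewrite /= ys sorted_lt_uniq.
  by move=> z; rewrite in_cons => /orP[/eqP->|/sst].
- left=> t t_chain sst y yt; apply/negPn/negP => ys.
  by apply: no_ext; exists t, y.
Qed.

Lemma chain_extends_to_maximal (A : pred T) s : is_chain_in le A s -> s <> [::] ->
  exists t, is_maximal_chain_in le A t /\ {subset s <= t}.
Proof.
move: {2}(#|T| - size s) (leqnn (#|T| - size s)) => n.
elim: n s => [|n IH] s gap s_chain s_nil;
  have [s_max|[t [t_chain sst lt_st]]] := chain_maximal_or_grows s_chain;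
  try by exists s; split=> //; split.
all: have t_size := size_chain (proj1 t_chain).
  by lia.
have [||u [u_max stu]] := IH t _ t_chain; first by lia.
  by case: (t) lt_st.
by exists u; split=> // z /sst /stu.
Qed.

Lemma maximal_chain_cover a b s : covers le a b ->
  is_maximal_chain_in le (down_set le a) s -> a \in s ->
  is_maximal_chain_in le (down_set le b) (rcons s b).
Proof.
move=> /andP[/andP[nab leab] /forallP no_between] [[s_sorted s_le] [s_nil s_max]] a_s.
have le_a y : y \in s -> le y a by move=> ys; exact: (allP s_le).
have neq_b y : y \in s -> y != b.
  move=> /le_a leya; apply: contra nab => /eqP eyb.
  by rewrite eyb in leya; rewrite (le_anti leab leya).
split; [split | split; first by case: (s)].
- rewrite (sorted_pairwise lt_trans) pairwise_rcons.
  rewrite -(sorted_pairwise lt_trans s) s_sorted andbT.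
  by apply/allP=> y ys; rewrite /lt_ neq_b //= (le_trans (le_a _ ys) leab).
- rewrite all_rcons /down_set le_refl /=.
  by apply/allP=> y ys; exact: le_trans (le_a _ ys) leab.
move=> t [t_sorted t_le] st y yt; rewrite mem_rcons in_cons.
have [//|ynb /=] := eqVneq y b.
have a_t : a \in t by apply: st; rewrite mem_rcons in_cons a_s orbT.
have t_le_a z : z \in t -> z != b -> le z a.
  move=> zt znb; have [->//|zna] := eqVneq z a.
  case/orP: (chain_total t_sorted zt a_t zna) => [/andP[]//|ltaz].
  move: (no_between z) (allP t_le z zt).
  by rewrite ltaz /lt_ znb /down_set /= => /negP nzb /nzb.
apply: (s_max [seq z <- t | z != b]).
- split; first exact: sorted_filter lt_trans _ _ t_sorted.
  by apply/allP=> z; rewrite mem_filter => /andP[znb zt]; exact: t_le_a.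
- by move=> z zs; rewrite mem_filter neq_b //= st // mem_rcons in_cons zs orbT.
- by rewrite mem_filter ynb.
Qed.

Lemma homogeneous_cover a b m n : covers le a b ->
  homogeneous_of_degree le (down_set le a) m ->
  homogeneous_of_degree le (down_set le b) n -> n = m.+1.
Proof.
move=> ab hom_a hom_b.
have [||s [s_max a_s]] := @chain_extends_to_maximal (down_set le a) [:: a] => //.
  by split; rewrite /= ?andbT /down_set.
have := hom_b _ (maximal_chain_cover ab s_max (a_s a (mem_head _ _))).
rewrite -(hom_a _ s_max) size_rcons /=; case: (s) (proj1 (proj2 s_max)) => //.
Qed.

Lemma graded_rank : graded le ->
  exists r : T -> nat, forall a b, covers le a b -> r b = (r a).+1.
Proof.
move=> /(_ _)/constructive_indefinite_description deg.
exists (fun x => proj1_sig (deg x)) => a b ab.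
exact: homogeneous_cover ab (proj2_sig (deg a)) (proj2_sig (deg b)).
Qed.

Let itv x y : pred T := [pred z | le x z && le z y].

Lemma cover_monotone (g : T -> R) :
  (forall a b, covers le a b -> (g a <= g b)%R) -> order_preserving le g.
Proof.
move=> g_cover x y; move: {2}#|itv x y| (leqnn #|itv x y|) => n.
elim: n x y => [|n IH] x y itv_size lexy; have [<-|nxy] := eqVneq x y; try lra.
  have : 0 < #|itv x y| by apply/card_gt0P; exists x; rewrite inE le_refl.
  by lia.
have [xy|] := boolP (covers le x y); first exact: g_cover.
rewrite /covers /lt_ nxy lexy /= => /forallPn[c]; rewrite negbK.
move=> /andP[/andP[nxc lexc] /andP[ncy lecy]].
have x_itv : x \in itv x y by rewrite inE le_refl.
have y_itv : y \in itv x y by rewrite inE le_refl lexy.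
apply: (@Rle_trans _ (g c)); apply: IH => //.
- suff : #|itv x c| < #|itv x y| by lia.
  apply/proper_card/properP; split; last exists y => //.
    by apply/subsetP=> z; rewrite !inE => /andP[-> lezc]; exact: le_trans lezc lecy.
  rewrite inE negb_and; apply/orP; right.
  by apply: contra ncy => leyc; rewrite (le_anti lecy leyc).
- suff : #|itv c y| < #|itv x y| by lia.
  apply/proper_card/properP; split; last exists x => //.
    by apply/subsetP=> z; rewrite !inE => /andP[lecz ->]; rewrite (le_trans lexc lecz).
  rewrite inE negb_and; apply/orP; left.
  by apply: contra nxc => lecx; rewrite (le_anti lexc lecx).
Qed.

End Poset.

Lemma Rle_bP (x y : R) : reflect (x <= y)%R (Rle_b x y).
Proof. by rewrite /Rle_b; case: Rle_dec => H; constructor. Qed.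

Section MatchingFunctions.
Variables (T : finType) (le : rel T) (f g : T -> R).
Hypothesis same_matching : forall w x, matching le g w x = matching le f w x.

Lemma card_up_bad_eq x : #|up_bad le g x| = #|up_bad le f x|.
Proof. exact/eq_card/same_matching. Qed.

Lemma card_down_bad_eq x : #|down_bad le g x| = #|down_bad le f x|.
Proof. by apply: eq_card => w; exact: same_matching. Qed.

Lemma eq_matching_morse : morse le f -> morse le g.
Proof. by move=> f_morse x; rewrite card_up_bad_eq card_down_bad_eq. Qed.

Lemma eq_matching_exclusion : exclusion le f -> exclusion le g.
Proof.
by move=> f_excl x; rewrite /critical !(card_up_bad_eq, card_down_bad_eq); apply: f_excl.
Qed.

End MatchingFunctions.

Section Morse.
Variables (T : finType) (le : rel T) (f : T -> R).
Hypothesis f_morse : morse le f.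
Hypothesis f_excl : exclusion le f.

Lemma matching_uniq w w' x : matching le f w x -> matching le f w' x -> w = w'.
Proof.
by move=> wx w'x; have [_ /card_le1_eqP down_uniq] := f_morse x; exact: down_uniq.
Qed.

Lemma matching_chain w x y : matching le f w x -> matching le f x y -> False.
Proof.
move=> wx xy.
have down_x : 0 < #|down_bad le f x| by apply/card_gt0P; exists w.
have up_x : 0 < #|up_bad le f x| by apply/card_gt0P; exists y.
apply: (f_excl (x := x)); last by rewrite down_x up_x.
by case=> _ down0; rewrite down0 in down_x.
Qed.

Lemma unmatched_cover_lt a b : covers le a b -> ~~ matching le f a b -> (f a < f b)%R.
Proof. by rewrite /matching => -> /= /Rle_bP /Rnot_le_lt. Qed.

End Morse.

Lemma atan_lex_lt (m n : nat) (u v : R) :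
  (m < n)%N \/ (m <= n)%N /\ (u < v)%R -> (4 * INR m + atan u < 4 * INR n + atan v)%R.
Proof.
case=> [lt_mn | [le_mn lt_uv]].
- have : (INR m + 1 <= INR n)%R by rewrite -S_INR; apply/le_INR/leP.
  by have := atan_bound u; have := atan_bound v; have := PI_4; lra.
- by have := le_INR _ _ (elimT leP le_mn); have := atan_increasing _ _ lt_uv; lra.
Qed.

Section OrderedMorse.
Variables (T : finType) (le : rel T) (f : T -> R).
Hypothesis le_poset : is_poset le.
Hypothesis f_morse : morse le f.
Hypothesis f_excl : exclusion le f.
Variable r : T -> nat.
Hypothesis r_cover : forall a b, covers le a b -> r b = (r a).+1.

Definition lower_end y := if [pick w | matching le f w y] is Some w then w else y.

Definition paired y : bool := [exists x, matching le f y x] || [exists w, matching le f w y].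

Definition level y : nat := 2 * r (lower_end y) + paired y.

Definition ordered_morse y : R := 4 * INR (level y) + atan (f (lower_end y)).

Variant lower_end_spec y : T -> Prop :=
  | LowerEndMatched w of matching le f w y : lower_end_spec y w
  | LowerEndSelf of (forall w, ~~ matching le f w y) : lower_end_spec y y.

Lemma lower_endP y : lower_end_spec y (lower_end y).
Proof. by rewrite /lower_end; case: pickP => [w|no_w]; constructor => // w; rewrite no_w. Qed.

Lemma ordered_morse_matched w x : matching le f w x -> ordered_morse w = ordered_morse x.
Proof.
move=> wx.
have low_x : lower_end x = w.
  case: (lower_endP x) => [w' w'x|no_x]; first exact: matching_uniq w'x wx.
  by move: (no_x w); rewrite wx.
have low_w : lower_end w = w.
  by case: (lower_endP w) => // v vw; case: (matching_chain f_excl vw wx).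
have paired_w : paired w by apply/orP; left; apply/existsP; exists x.
have paired_x : paired x by apply/orP; right; apply/existsP; exists w.
by rewrite /ordered_morse /level low_x low_w paired_w paired_x.
Qed.

Lemma ordered_morse_unmatched_cover a b : covers le a b -> ~~ matching le f a b ->
  (ordered_morse a < ordered_morse b)%R.
Proof.
move=> ab nab; have fab := unmatched_cover_lt ab nab.
have rab := r_cover ab; have paired_a : paired a <= 1 by case: (paired a).
apply: atan_lex_lt; rewrite /level.
case: (lower_endP a) => [v /andP[/r_cover rva _]|_];
  case: (lower_endP b) => [w /[dup] wb /andP[/r_cover rwb fwb]|_]; try by left; lia.
have paired_b : paired b by apply/orP; right; apply/existsP; exists w.
right; split; first by rewrite paired_b; lia.
by move/Rle_bP: fwb; lra.
Qed.

Lemma matching_ordered_morse w x : matching le ordered_morse w x = matching le f w x.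
Proof.
have [wx|nwx] := boolP (covers le w x); last by rewrite /matching (negbTE nwx).
rewrite {1}/matching wx /=.
have [m_wx|n_wx] := boolP (matching le f w x).
  by rewrite (ordered_morse_matched m_wx); apply/Rle_bP; lra.
by apply/Rle_bP; have := ordered_morse_unmatched_cover wx n_wx; lra.
Qed.

Lemma ordered_morse_order_preserving : order_preserving le ordered_morse.
Proof.
apply: cover_monotone => // a b ab.
have [m_ab|n_ab] := boolP (matching le f a b).
  by rewrite (ordered_morse_matched m_ab); lra.
by have := ordered_morse_unmatched_cover ab n_ab; lra.
Qed.

End OrderedMorse.

Theorem mainTheorem7 (T : finType) (le : rel T) (f : T -> R) :
  is_poset le -> graded le -> morse le f -> exclusion le f ->
  exists f' : T -> R,
    order_preserving le f' /\ morse le f' /\ exclusion le f' /\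
    (forall w x, matching le f' w x = matching le f w x).
Proof.
move=> le_poset le_graded f_morse f_excl.
have [r r_cover] := graded_rank le_poset le_graded.
have same_matching := matching_ordered_morse f_morse f_excl r_cover.
exists (ordered_morse le f r); split.
  exact: ordered_morse_order_preserving.
split; first exact: eq_matching_morse same_matching f_morse.
by split; first exact: eq_matching_exclusion same_matching f_excl.
Qed.
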